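(* Let $\mathcal{X}=\{\boldsymbol{x}_j\}_{j=1}^{N}$ be a finite dataset with ground-truth partition $\mathcal{S}^*=\{\mathcal{S}_k^*\}_{k=1}^K$, let $\omega>0$, and let $\mathcal{C}$ be the set of all pairwise constraints derived from $\mathcal{S}^*$, i.e. for every pair $j\neq j'$ it contains $(j,j',y)$ with $y=1$ if $\boldsymbol{x}_j,\boldsymbol{x}_{j'}$ lie in the same cluster and $y=0$ otherwise. Suppose $\mathcal{Z}^*=\{\boldsymbol{z}_j^*\}_{j=1}^N\subset\mathbb{R}^D\setminus\{\mathbf{0}\}$ satisfies $\mathcal{L}_{\mathrm{ang}}(\mathcal{Z}^*;\mathcal{C},\omega)=0$. Then for any $\boldsymbol{x}_j\in\mathcal{S}_k^*$ and $\boldsymbol{x}_{j'}\in\mathcal{S}_{k'}^*$: $\theta_{\boldsymbol{z}_j^*,\boldsymbol{z}_{j'}^*}=0$ if $k=k'$, and $\theta_{\boldsymbol{z}_j^*,\boldsymbol{z}_{j'}^*}\ge \pi/\omega$ if $k\neq k'$.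
   Context: For nonzero $\boldsymbol{u},\boldsymbol{v}\in\mathbb{R}^D$, $\theta_{\boldsymbol{u},\boldsymbol{v}}=\arccos\big(\langle\boldsymbol{u},\boldsymbol{v}\rangle/(\|\boldsymbol{u}\|\|\boldsymbol{v}\|)\big)\in[0,\pi]$. Given constraints $\mathcal{C}=\{(a_i,b_i,y_i)\}_{i=1}^{|\mathcal{C}|}$ with $y_i\in\{0,1\}$, embeddings $\boldsymbol{z}_j$ and a factor $\omega>0$, the SpherePair loss is $\mathcal{L}_{\mathrm{ang}}=-\frac{1}{|\mathcal{C}|}\sum_{i}\big(y_i\log \mathrm{Sim}(a_i,b_i)+(1-y_i)\log(1-\mathrm{Sim}(a_i,b_i))\big)$, where $\mathrm{Sim}(a_i,b_i)=\tfrac12(\cos\theta_{\boldsymbol{z}_{a_i},\boldsymbol{z}_{b_i}}+1)$ if $y_i=1$ and $\mathrm{Sim}(a_i,b_i)=\tfrac12(\cos(\min(\omega\theta_{\boldsymbol{z}_{a_i},\boldsymbol{z}_{b_i}},\pi))+1)$ if $y_i=0$ (with the convention $\log 0=-\infty$). *)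

From HB Require Import structures.
From mathcomp Require Import all_boot all_order all_algebra.
From mathcomp Require Import all_classical all_reals all_analysis.
Set Implicit Arguments. Unset Strict Implicit. Unset Printing Implicit Defensive.
Import Order.TTheory GRing.Theory Num.Theory.
Local Open Scope ring_scope.

Definition dotv {R : realType} {D : nat} (u v : 'rV[R]_D) : R :=
  \sum_(i < D) u 0 i * v 0 i.
Definition normv {R : realType} {D : nat} (u : 'rV[R]_D) : R :=
  Num.sqrt (dotv u u).

Definition angle {R : realType} {D : nat} (u v : 'rV[R]_D) : R :=
  acos (dotv u v / (normv u * normv v)).

(* Extended logarithm, with log 0 = -oo (and log x = -oo for x <= 0). *)
Definition elog {R : realType} (x : R) : \bar R :=
  if 0 < x then (ln x)%:E else -oo%E.

Definition Sim {R : realType} {D : nat} (omega : R) (za zb : 'rV[R]_D) (y : bool) : R :=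
  if y then (cos (angle za zb) + 1) / 2
  else (cos (Order.min (omega * angle za zb) pi) + 1) / 2.

(* Constraints: triples (a_i, b_i, y_i), y_i = true means y_i = 1. *)
Definition L_ang {R : realType} {N D : nat} (Z : 'I_N -> 'rV[R]_D)
    (C : seq ('I_N * 'I_N * bool)) (omega : R) : \bar R :=
  (- (((size C)%:R^-1 : R)%:E *
      \sum_(c <- C)
        (((c.2%:R : R)%:E * elog (Sim omega (Z c.1.1) (Z c.1.2) c.2)) +
         (((1 - c.2%:R) : R)%:E * elog (1 - Sim omega (Z c.1.1) (Z c.1.2) c.2)))))%E.

(* All pairwise constraints derived from the ground-truth partition, given by
   a cluster-assignment function lab : 'I_N -> 'I_K (x_j in S_k iff lab j = k):
   for every ordered pair j <> j', the triple (j, j', [lab j == lab j']). *)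
Definition all_constraints {N K : nat} (lab : 'I_N -> 'I_K) : seq ('I_N * 'I_N * bool) :=
  [seq (p.1, p.2, lab p.1 == lab p.2) | p <- enum [pred p : 'I_N * 'I_N | p.1 != p.2]].

(** A zero loss forces every summand of [L_ang] to vanish, since each one is
    a nonpositive logarithm of a similarity in [[0, 1]].  Hence a positive pair
    has similarity 1, i.e. cosine 1 and angle 0, while a negative pair has
    similarity 0, i.e. [cos (min (omega theta) pi) = -1], which on [[0, pi]]
    forces [min (omega theta) pi = pi], that is [theta >= pi / omega]. *)

From HB Require Import structures.
From mathcomp Require Import all_boot all_order all_algebra.
From mathcomp Require Import all_classical all_reals all_analysis.
From mathcomp Require Import lra.
Set Implicit Arguments. Unset Strict Implicit. Unset Printing Implicit Defensive.
Import Order.TTheory GRing.Theory Num.Theory.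
Local Open Scope ring_scope.

Section Trigonometry.
Variable R : realType.
Implicit Types x t : R.

(* Outside [[-1, 1]] the defining set of [acos] is empty and [acos] returns
   its default value [0]. *)
Lemma acos_itv x : 0 <= acos x <= pi.
Proof.
rewrite unlock /acos; case: xgetP => [y -> [] //|_].
by rewrite /point /= lexx pi_ge0.
Qed.

Lemma cos_eq1_itv t : 0 <= t <= pi -> cos t = 1 -> t = 0.
Proof.
move=> t0pi cost1; apply: cos_inj; rewrite ?cos0 //.
by rewrite in_itv /= lexx pi_ge0.
Qed.

Lemma cos_eqN1_itv t : 0 <= t <= pi -> cos t = -1 -> t = pi.
Proof.
move=> t0pi costN1; apply: cos_inj; rewrite ?cospi //.
by rewrite in_itv /= lexx pi_ge0.
Qed.

End Trigonometry.

Section Angles.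
Variables (R : realType) (D : nat).
Implicit Types u v : 'rV[R]_D.

Lemma angle_itv u v : 0 <= angle u v <= pi.
Proof. exact: acos_itv. Qed.

Lemma dotv_gt0 u : u != 0 -> 0 < dotv u u.
Proof.
move=> u0; have sq_ge0 (i : 'I_D) : true -> 0 <= u 0 i * u 0 i.
  by move=> _; rewrite -expr2 sqr_ge0.
rewrite lt_def sumr_ge0 // andbT; apply: contra u0 => /eqP uu0.
apply/eqP/rowP => i; have /eqP := psumr_eq0P sq_ge0 uu0 (i := i) isT.
by rewrite mulf_eq0 orbb mxE => /eqP.
Qed.

Lemma angle_refl u : u != 0 -> angle u u = 0.
Proof.
move/dotv_gt0 => uu0.
by rewrite /angle /normv -expr2 sqr_sqrtr ?ltW // divff ?gt_eqF // acos1.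
Qed.

Lemma Sim_itv (omega : R) u v y : 0 <= Sim omega u v y <= 1.
Proof.
have cos_half (t : R) : 0 <= (cos t + 1) / 2 <= 1.
  by have := cos_le1 t; have := cos_geN1 t; move=> *; apply/andP; split; lra.
by case: y; apply: cos_half.
Qed.

Lemma Sim_eq1_angle (omega : R) u v : Sim omega u v true = 1 -> angle u v = 0.
Proof.
move=> Sim1; apply: cos_eq1_itv; first exact: angle_itv.
by move: Sim1; rewrite /Sim; lra.
Qed.

Lemma Sim_eq0_angle (omega : R) u v :
  0 < omega -> Sim omega u v false = 0 -> pi / omega <= angle u v.
Proof.
move=> omega_gt0 Sim0; rewrite ler_pdivrMr // [X in _ <= X]mulrC.
have [le_pi|/ltW //] := leP (omega * angle u v) pi.
have /andP[theta_ge0 _] := angle_itv u v.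
suff: omega * angle u v = pi by move=> ->.
apply: cos_eqN1_itv; first by rewrite le_pi andbT pmulr_rge0.
by move: Sim0; rewrite /Sim (min_l le_pi); lra.
Qed.

End Angles.

Section Loss.
Variable R : realType.

Lemma elog_le0 (x : R) : x <= 1 -> (elog x <= 0)%E.
Proof. by rewrite /elog; case: ifP => // _ /ln_le0; rewrite lee_fin. Qed.

Lemma elog_eq0 (x : R) : elog x = 0%E -> x = 1.
Proof.
rewrite /elog; case: ifPn => // x_gt0 [] /eqP.
by rewrite ln_eq0 // => /eqP.
Qed.

Lemma nsume_eq0 (I : eqType) (r : seq I) (F : I -> \bar R) :
  (forall i, F i <= 0)%E -> (\sum_(i <- r) F i = 0)%E ->
  {in r, forall i, F i = 0%E}.
Proof.
move=> F_le0; elim: r => [|a r IHr] //=; rewrite big_cons => /eqP.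
rewrite nadde_eq0 ?sume_le0 // => /andP[/eqP Fa0 /eqP sum0] i.
by rewrite inE => /predU1P[->|/IHr]; last exact.
Qed.

Lemma L_ang_eq0 (N D : nat) (Z : 'I_N -> 'rV[R]_D)
    (C : seq ('I_N * 'I_N * bool)) (omega : R) :
  L_ang Z C omega = 0%E ->
  {in C, forall c, Sim omega (Z c.1.1) (Z c.1.2) c.2 = (c.2 : nat)%:R}.
Proof.
case: C => [//|c0 C]; rewrite /L_ang => /eqP.
rewrite oppe_eq0 mule_eq0 eqe invr_eq0 pnatr_eq0 /= => /eqP sum0.
have summand_le0 (c : 'I_N * 'I_N * bool) :
    ((c.2%:R : R)%:E * elog (Sim omega (Z c.1.1) (Z c.1.2) c.2) +
     ((1 - c.2%:R) : R)%:E * elog (1 - Sim omega (Z c.1.1) (Z c.1.2) c.2)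
     <= 0)%E.
  move: (Sim_itv omega (Z c.1.1) (Z c.1.2) c.2).
  case: c => [[a b] []] /= /andP[S0 S1];
    rewrite ?subrr ?subr0 ?mul0e ?mul1e ?adde0 ?add0e; apply: elog_le0; lra.
move=> [[a b] y] /(nsume_eq0 summand_le0 sum0) /=.
by case: y; rewrite /= ?subrr ?subr0 ?mul0e ?mul1e ?adde0 ?add0e
  => /elog_eq0; lra.
Qed.

End Loss.

Lemma mem_all_constraints (N K : nat) (lab : 'I_N -> 'I_K) (j j' : 'I_N) :
  j != j' -> (j, j', lab j == lab j') \in all_constraints lab.
Proof. by move=> jj'; apply/mapP; exists (j, j'); rewrite ?mem_enum. Qed.

Theorem proposition1 (R : realType) (N K D : nat) (lab : 'I_N -> 'I_K)
    (omega : R) (Z : 'I_N -> 'rV[R]_D) :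
  0 < omega ->
  (forall j, Z j != 0) ->
  L_ang Z (all_constraints lab) omega = 0%E ->
  forall (j j' : 'I_N) (k k' : 'I_K), lab j = k -> lab j' = k' ->
    (k = k' -> angle (Z j) (Z j') = 0) /\
    (k <> k' -> pi / omega <= angle (Z j) (Z j')).
Proof.
move=> omega_gt0 Z_neq0 loss0 j j' k k' <- <-.
have [<-|jj'] := eqVneq j j'; first by split=> // _; exact: angle_refl.
have := L_ang_eq0 loss0 (mem_all_constraints lab jj'); rewrite /=.
case: eqP => [same /Sim_eq1_angle|differ /(Sim_eq0_angle omega_gt0)] theta.
- by split=> // /(_ same).
- by split=> // /differ.
Qed.
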